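(* Let $\Gamma$ and $\tilde\Gamma$ be two generalized cospectral signed bipartite graphs with a common characteristic polynomial $\phi(x)$ that is irreducible over $\mathbb{Q}$. Suppose their adjacency matrices are $$A=A(\Gamma)=\begin{bmatrix} O & M\\ M^{\mathrm T} & O\end{bmatrix},\qquad \tilde A=A(\tilde\Gamma)=\begin{bmatrix} O & \tilde M\\ \tilde M^{\mathrm T} & O\end{bmatrix}.$$ Then there exists a regular orthogonal matrix $Q$ such that $Q^{\mathrm T}AQ=\tilde A$, where $$Q=\begin{bmatrix} Q_1 & O\\ O & Q_2\end{bmatrix}\quad\text{or}\quad Q=\begin{bmatrix} O & Q_1\\ Q_2 & O\end{bmatrix},$$ with $Q_1$ and $Q_2$ regular rational orthogonal matrices.
   Context: A signed graph is a simple graph with each edge assigned a sign $\pm1$; its adjacency matrix has entry equal to the sign of the edge for adjacent vertices and $0$ otherwise. A signed bipartite graph is a signed graph whose underlying graph is bipartite; the vertices are ordered so that the adjacency matrix has the displayed block form. Two signed graphs with adjacency matrices $A,\tilde A$ are generalized cospectral if $\det(xI-A)=\det(xI-\tilde A)$ and $\det(xI-(J-I-A))=\det(xI-(J-I-\tilde A))$, $J$ the all-ones matrix. A square matrix $Q$ is orthogonal if $Q^{\mathrm T}Q=I$, rational if all entries are rational, and regular if $Qe=e$, where $e$ is the all-ones vector. *)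

From mathcomp Require Import all_boot all_order all_algebra.
Set Implicit Arguments. Unset Strict Implicit. Unset Printing Implicit Defensive.
Import GRing.Theory Num.Theory.
Local Open Scope ring_scope.

(* We also require Q Q^T = I, which (over a field)
   is equivalent for square matrices and forces the two dimensions to agree,
   so that the definition can be applied to matrices whose dimensions are only
   propositionally equal. *)
Definition orthogonal_mx (m n : nat) (Q : 'M[rat]_(m, n)) : Prop :=
  Q^T *m Q = 1%:M /\ Q *m Q^T = 1%:M.

Definition regular (m n : nat) (Q : 'M[rat]_(m, n)) : Prop :=
  Q *m (const_mx 1 : 'cV[rat]_n) = (const_mx 1 : 'cV[rat]_m).

Definition signed_block (p q : nat) (M : 'M[rat]_(p, q)) : Prop :=
  forall i j, M i j \in [:: -1; 0; 1].

Definition bip_adj (p q : nat) (M : 'M[rat]_(p, q)) : 'M[rat]_(p + q) :=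
  block_mx 0 M M^T 0.

Definition gen_cospectral (n m : nat) (A : 'M[rat]_n) (B : 'M[rat]_m) : Prop :=
  char_poly A = char_poly B /\
  char_poly (const_mx 1 - 1%:M - A) = char_poly (const_mx 1 - 1%:M - B).

(* Writing J = e e^T, the matrix determinant lemma gives
   det (yI - A + J) = phi(y) (1 + e^T (yI - A)^-1 e), so generalized cospectral
   graphs have the same function y |-> e^T (yI - A)^-1 e.  Multiplied by phi, it
   is a polynomial whose coefficients are triangular in the walk numbers
   e^T A^k e, so these agree for k < n, hence for all k by Cayley-Hamilton.
   Irreducibility of phi makes every nonzero vector cyclic: the walk matrices
   W = [e, Ae, ..., A^(n-1) e] are invertible and have equal Gram matrices, so
   Q = W W~^-1 is a regular orthogonal matrix with Q^T A Q = A~.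
   Finally D = diag(I, -I) anticommutes with both adjacency matrices, so
   Y = D Q D~ Q^T commutes with A and is a polynomial in A.  Being symmetric and
   orthogonal, Y^2 = I, and irreducibility of phi forces Y = +-I, i.e.
   Q D~ = +-D Q: this is the block-diagonal or block-antidiagonal shape of Q. *)

From mathcomp Require Import all_boot all_order all_algebra.
From mathcomp Require Import ring zify.
Set Implicit Arguments. Unset Strict Implicit. Unset Printing Implicit Defensive.
Import GRing.Theory Num.Theory.
Local Open Scope ring_scope.

Lemma poly_horner_eq0 (R : numDomainType) (p : {poly R}) :
  (forall x, p.[x] = 0) -> p = 0.
Proof.
move=> p0; apply/eqP; apply: contraT => nz_p.
have := max_poly_roots nz_p (rs := [seq i%:R | i <- iota 0 (size p)]).
rewrite size_map size_iota ltnn; apply.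
  by apply/allP => _ /mapP[i _ ->]; rewrite /root p0.
by rewrite map_inj_uniq ?iota_uniq // => i j /eqP; rewrite eqr_nat => /eqP.
Qed.

Lemma dvdp_irredp_mul (R : idomainType) (p q r : {poly R}) :
  irreducible_poly p -> p %| q * r -> (p %| q) || (p %| r).
Proof.
move=> irr_p; have [//|/= ndvd_pq] := boolP (p %| q).
by rewrite Gauss_dvdpr // irreducible_poly_coprime.
Qed.

Fixpoint prefix_poly (R : nzRingType) (d : nat -> R) k : {poly R} :=
  if k is k'.+1 then 'X * prefix_poly d k' + (d k')%:P else 0.

Lemma coef_prefix_poly (R : nzRingType) (d : nat -> R) k i :
  (prefix_poly d k)`_i = if (i < k)%N then d (k.-1 - i)%N else 0.
Proof.
elim: k i => [|k IHk] [|i] /=; rewrite ?coef0 // coefD coefXM coefC /=.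
  by rewrite add0r subn0.
by rewrite addr0 IHk ltnS; case: ifP => // ik; congr d; lia.
Qed.

Lemma prefix_poly_comb_inj (R : nzRingType) n (p : {poly R}) (d d' : nat -> R) :
  p \is monic -> size p = n.+2 ->
  \sum_(k < size p) p`_k *: prefix_poly d k = \sum_(k < size p) p`_k *: prefix_poly d' k ->
  forall m, (m <= n)%N -> d m = d' m.
Proof.
move=> /monicP lead_p size_p dd'; elim/ltn_ind => m IHm le_mn.
(* As p is monic, coefficient n - m reads d m plus a combination of d i, i < m. *)
have coef_comb e : (\sum_(k < size p) p`_k *: prefix_poly e k)`_(n - m) =
    \sum_(k < n.+1) p`_k * (if (n - m < k)%N then e (k.-1 - (n - m))%N else 0) + e m.
  rewrite coef_sum size_p big_ord_recr -[nat_of_ord ord_max]/n.+1; congr (_ + _).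
    by apply: eq_bigr => k _; rewrite coefZ coef_prefix_poly.
  have -> : p`_n.+1 = 1 by rewrite -lead_p lead_coefE size_p.
  by rewrite coefZ coef_prefix_poly /= ltnS leq_subr mul1r subKn.
move: (congr1 (coefp (n - m)) dd'); rewrite /= !coef_comb.
rewrite (eq_bigr (fun k : 'I_n.+1 => p`_k * (if (n - m < k)%N then d' (k.-1 - (n - m))%N else 0))).
  by move/addrI.
move=> k _; case: ifP => // lt_k.
by move: (ltn_ord k) => lt_kn; rewrite IHm //; lia.
Qed.

Lemma horner_char_poly (R : comNzRingType) n (A : 'M[R]_n) y :
  (char_poly A).[y] = \det (y%:M - A).
Proof.
rewrite /char_poly -horner_evalE -det_map_mx; congr (\det _).
apply/matrixP => i j; rewrite !mxE /horner_evalE /= horner_evalE.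
by rewrite hornerD hornerN hornerMn hornerX hornerC.
Qed.

Lemma det_add_rank1 (R : comNzRingType) n (u : 'cV[R]_n) (v : 'rV[R]_n) :
  \det (1%:M + u *m v) = 1 + (v *m u) 0 0.
Proof.
pose P : 'M[R]_(n + 1) := block_mx 1%:M u (- v) 1%:M.
have P_lower : P = block_mx 1%:M 0 (- v) 1%:M *m block_mx 1%:M u 0 (1%:M + v *m u).
  rewrite mulmx_block !(mul1mx, mul0mx, mulmx0, mulmx1, addr0, add0r).
  by rewrite mulNmx addrCA addNr addr0.
have P_upper : P = block_mx (1%:M + u *m v) u 0 1%:M *m block_mx 1%:M 0 (- v) 1%:M.
  rewrite mulmx_block !(mul1mx, mul0mx, mulmx0, mulmx1, addr0, add0r).
  by rewrite mulmxN addrK.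
move: (congr1 determinant P_lower); rewrite P_upper !det_mulmx.
rewrite det_lblock det_ublock det_ublock !det1 !(mul1r, mulr1) det_mx11 => ->.
by rewrite !mxE eqxx mulr1n.
Qed.

Lemma char_poly_complement (R : comNzRingType) n (A : 'M[R]_n) y :
  (char_poly (const_mx 1 - 1%:M - A)).[y] =
  (-1) ^+ n * \det ((- y - 1)%:M - A + const_mx 1).
Proof.
rewrite horner_char_poly -detZ; congr (\det _); apply/matrixP => i j; rewrite !mxE.
by case: (i == j); rewrite /= ?mulr1n ?mulr0n; ring.
Qed.

Lemma const_mx1_mul_tr (R : comNzRingType) n :
  (const_mx 1 : 'M[R]_n) = const_mx 1 *m (const_mx 1 : 'cV[R]_n)^T.
Proof. by apply/matrixP => i j; rewrite !mxE big_ord1 !mxE mulr1. Qed.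

Lemma const_mx1_neq0 (R : nzRingType) m n : (const_mx 1 : 'M[R]_(m.+1, n.+1)) != 0.
Proof. by apply/eqP => /matrixP/(_ 0 0); rewrite !mxE => /eqP; rewrite oner_eq0. Qed.

Section HornerMx.
Variables (R : comNzRingType) (n : nat).

Lemma horner_mx_sum (A : 'M[R]_n.+1) p : horner_mx A p = \sum_(i < size p) p`_i *: A ^+ i.
Proof.
rewrite -{1}(coefK p) poly_def rmorph_sum; apply: eq_bigr => i _.
by rewrite /= horner_mxZ rmorphXn /= horner_mx_X.
Qed.

Lemma horner_mx_Xn (A : 'M[R]_n.+1) k : horner_mx A 'X^k = A ^+ k.
Proof. by rewrite rmorphXn /= horner_mx_X. Qed.

Lemma trmxX (A : 'M[R]_n.+1) k : (A ^+ k)^T = A^T ^+ k.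
Proof.
elim: k => [|k IHk]; first by rewrite !expr0 trmx1.
by rewrite exprS exprSr -!mulmxE trmx_mul IHk.
Qed.

Lemma trmx_horner_mx (A : 'M[R]_n.+1) p : (horner_mx A p)^T = horner_mx A^T p.
Proof.
rewrite !horner_mx_sum linear_sum; apply: eq_bigr => i _.
by rewrite linearZ /= trmxX.
Qed.

End HornerMx.

Section Krylov.
Variables (F : fieldType) (n : nat) (A : 'M[F]_n.+1).

Lemma horner_mx_modp (p : {poly F}) : horner_mx A (p %% char_poly A) = horner_mx A p.
Proof.
by rewrite [in RHS](divp_eq p (char_poly A)) rmorphD rmorphM /= Cayley_Hamilton mulr0 add0r.
Qed.

Lemma horner_mx_dvdp p : char_poly A %| p -> horner_mx A p = 0.
Proof. by move=> /dvdpP[r ->]; rewrite rmorphM /= Cayley_Hamilton mulr0. Qed.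

Lemma size_modp_char_poly (p : {poly F}) : (size (p %% char_poly A)%R <= n.+1)%N.
Proof. by rewrite -ltnS -(size_char_poly A) ltn_modp monic_neq0 ?char_poly_monic. Qed.

Hypothesis irrA : irreducible_poly (char_poly A).

Lemma dvdp_char_poly_horner_mx m (V : 'M[F]_(n.+1, m)) p :
  V != 0 -> horner_mx A p *m V = 0 -> char_poly A %| p.
Proof.
move=> nzV pV0; apply: contraT => ndvd.
have /Bezout_eq1_coprimepP[[u1 u2] /= Bezout] : coprimep (char_poly A) p.
  by rewrite irreducible_poly_coprime.
move: (congr1 (fun q => horner_mx A q *m V) Bezout).
rewrite /= rmorphD !rmorphM /= Cayley_Hamilton mulr0 add0r rmorph1 mul1mx.
by rewrite -mulmxA pV0 mulmx0 => /esym/eqP; rewrite (negPf nzV).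
Qed.

Lemma horner_mx_sqr_eq1 p : horner_mx A p *m horner_mx A p = 1%:M ->
  horner_mx A p = 1%:M \/ horner_mx A p = - 1%:M.
Proof.
move=> sqr1.
have : horner_mx A ((p - 1) * (p + 1)) *m 1%:M = 0.
  have -> : (p - 1) * (p + 1) = p * p - 1 by ring.
  by rewrite rmorphB rmorphM rmorph1 /= -mulmxE sqr1 subrr mul0mx.
move/(dvdp_char_poly_horner_mx (oner_neq0 _))/(dvdp_irredp_mul irrA)/orP.
case=> /horner_mx_dvdp; rewrite ?rmorphB ?rmorphD rmorph1 /=.
  by move/eqP; rewrite subr_eq0 => /eqP; left.
by move/eqP; rewrite addr_eq0 => /eqP; right.
Qed.

Variable v : 'cV[F]_n.+1.

Definition krylov_mx : 'M[F]_n.+1 := \matrix_(i, j) (A ^+ j *m v) i 0.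

Lemma col_krylov_mx j : col j krylov_mx = A ^+ j *m v.
Proof. by apply/matrixP => i k; rewrite !mxE ord1. Qed.

Lemma horner_mx_krylov (c : 'cV[F]_n.+1) :
  horner_mx A (\poly_(j < n.+1) c (inord j) 0) *m v = krylov_mx *m c.
Proof.
rewrite poly_def rmorph_sum mulmx_suml; apply/matrixP => i k.
rewrite summxE !mxE; apply: eq_bigr => j _.
by rewrite /= horner_mxZ horner_mx_Xn -scalemxAl !mxE ord1 mulrC inord_val.
Qed.

Hypothesis nz_v : v != 0.

Lemma krylov_mx_unit : krylov_mx \in unitmx.
Proof.
rewrite unitmxE unitfE -det_tr; apply/negP => /det0P[c nz_c Kc0].
pose p := \poly_(j < n.+1) c^T (inord j) 0.
have /(dvdp_char_poly_horner_mx nz_v) : horner_mx A p *m v = 0.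
  by rewrite horner_mx_krylov -[krylov_mx *m _]trmxK trmx_mul trmxK Kc0 trmx0.
have nz_p : p != 0.
  apply: contraNneq nz_c => p0; apply/eqP/rowP => j.
  by move: (congr1 (coefp j) p0); rewrite /= coef_poly ltn_ord inord_val coef0 !mxE.
by move/(dvdp_leq nz_p); rewrite size_char_poly ltnNge size_poly.
Qed.

Lemma eq_mx_on_krylov m (X Y : 'M[F]_(m, n.+1)) :
  (forall j : 'I_n.+1, X *m (A ^+ j *m v) = Y *m (A ^+ j *m v)) -> X = Y.
Proof.
move=> XY; apply: (can_inj (mulmxK krylov_mx_unit)); apply/matrixP => i j.
have : col j (X *m krylov_mx) = col j (Y *m krylov_mx).
  by rewrite !colE -!mulmxA -!colE col_krylov_mx XY.
by move/matrixP/(_ i 0); rewrite !mxE.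
Qed.

End Krylov.

Lemma commute_horner_mx (F : fieldType) n (A Y : 'M[F]_n.+1) :
  irreducible_poly (char_poly A) -> Y *m A = A *m Y -> exists p, Y = horner_mx A p.
Proof.
move=> irrA YA; pose e : 'cV[F]_n.+1 := const_mx 1.
have Ke_unit := krylov_mx_unit irrA (const_mx1_neq0 _ _ _).
pose p := \poly_(j < n.+1) (invmx (krylov_mx A e) *m (Y *m e)) (inord j) 0.
have pe : horner_mx A p *m e = Y *m e by rewrite horner_mx_krylov mulKVmx.
exists p; apply: (eq_mx_on_krylov irrA (const_mx1_neq0 _ _ _)) => j.
have YAj : Y *m A ^+ j = A ^+ j *m Y.
  by rewrite mulmxE; apply/commrX; rewrite /GRing.comm -!mulmxE.
have pAj : horner_mx A p *m A ^+ j = A ^+ j *m horner_mx A p.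
  by rewrite mulmxE -horner_mx_Xn; apply: comm_horner_mx2.
by rewrite !mulmxA YAj pAj -!mulmxA pe.
Qed.

Section Walks.
Variables (F : fieldType) (n : nat) (v : 'cV[F]_n.+1).

Definition walks (A : 'M[F]_n.+1) k := (v^T *m A ^+ k *m v) 0 0.

Lemma walks_horner_mx A p :
  (v^T *m horner_mx A p *m v) 0 0 = \sum_(i < size p) p`_i * walks A i.
Proof.
rewrite horner_mx_sum mulmx_sumr mulmx_suml summxE; apply: eq_bigr => i _.
by rewrite -scalemxAr -scalemxAl mxE.
Qed.

Lemma walks_eq A B : char_poly A = char_poly B ->
  (forall m : 'I_n.+1, walks A m = walks B m) -> forall k, walks A k = walks B k.
Proof.
move=> AB walksAB k; rewrite /walks -!horner_mx_Xn.
rewrite -(horner_mx_modp A) -(horner_mx_modp B) -AB !walks_horner_mx.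
apply: eq_bigr => i _.
by rewrite (walksAB (widen_ord (size_modp_char_poly A _) i)).
Qed.

Lemma gram_krylov_mx A : A^T = A ->
  (krylov_mx A v)^T *m krylov_mx A v = \matrix_(i, j) walks A (i + j).
Proof.
move=> symA; apply/matrixP => i j; rewrite [RHS]mxE /walks exprD.
have -> : v^T *m (A ^+ i * A ^+ j) *m v = (A ^+ i *m v)^T *m (A ^+ j *m v).
  by rewrite trmx_mul trmxX symA -mulmxE !mulmxA.
rewrite !mxE; apply: eq_bigr => k _.
by rewrite !mxE; congr (_ * _); apply: eq_bigr => l _; rewrite !mxE.
Qed.

Variables (A B : 'M[F]_n.+1).
Hypotheses (symA : A^T = A) (symB : B^T = B) (AB : char_poly A = char_poly B).
Hypotheses (irrA : irreducible_poly (char_poly A)) (nz_v : v != 0).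
Hypothesis walksAB : forall k, walks A k = walks B k.

Lemma krylov_orthogonal_similar : exists Q : 'M[F]_n.+1,
  [/\ Q^T *m Q = 1%:M, Q *m Q^T = 1%:M, Q *m v = v & Q *m B = A *m Q].
Proof.
have irrB : irreducible_poly (char_poly B) by rewrite -AB.
have KB_unit := krylov_mx_unit irrB nz_v.
pose Q := krylov_mx A v *m invmx (krylov_mx B v).
have QK : Q *m krylov_mx B v = krylov_mx A v by rewrite mulmxKV.
have Q_orth : Q^T *m Q = 1%:M.
  have gramAB : (krylov_mx A v)^T *m krylov_mx A v = (krylov_mx B v)^T *m krylov_mx B v.
    by rewrite !gram_krylov_mx //; apply/matrixP => i j; rewrite !mxE walksAB.
  rewrite /Q trmx_mul mulmxA -(mulmxA _ _ (krylov_mx A v)) gramAB mulmxA -trmx_mul mulmxV //.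
  by rewrite trmx1 mul1mx mulmxV.
clearbody Q.
have Q_powers (j : 'I_n.+1) : Q *m (B ^+ j *m v) = A ^+ j *m v.
  by rewrite -!col_krylov_mx !colE mulmxA QK.
have Q_horner p : Q *m (horner_mx B p *m v) = horner_mx A p *m v.
  rewrite -(horner_mx_modp A) -(horner_mx_modp B) -AB !horner_mx_sum.
  rewrite !mulmx_suml mulmx_sumr; apply: eq_bigr => i _.
  by rewrite -!scalemxAl -scalemxAr (Q_powers (widen_ord (size_modp_char_poly A _) i)).
exists Q; split => //; first exact: mulmx1C.
  by move: (Q_horner 1); rewrite !rmorph1 !mul1mx.
apply: (eq_mx_on_krylov irrB nz_v) => j.
have BBj : B *m (B ^+ j *m v) = B ^+ j.+1 *m v by rewrite mulmxA mulmxE -exprS.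
rewrite -!mulmxA BBj -[B ^+ j.+1]horner_mx_Xn Q_horner horner_mx_Xn Q_powers.
by rewrite exprS -mulmxE mulmxA.
Qed.

End Walks.

Section Resolvent.
Variables (F : fieldType) (n : nat) (v : 'cV[F]_n.+1).

Definition resolvent_walks (A : 'M[F]_n.+1) y k :=
  (v^T *m A ^+ k *m invmx (y%:M - A) *m v) 0 0.

Definition walk_numerator (A : 'M[F]_n.+1) : {poly F} :=
  \sum_(k < size (char_poly A)) (char_poly A)`_k *: prefix_poly (walks v A) k.

Variables (A : 'M[F]_n.+1) (y : F).
Hypothesis nz_charAy : (char_poly A).[y] != 0.

Lemma resolvent_unit : y%:M - A \in unitmx.
Proof. by rewrite unitmxE unitfE -horner_char_poly. Qed.

Lemma det_add_resolvent :
  \det (y%:M - A + v *m v^T) = (char_poly A).[y] * (1 + resolvent_walks A y 0).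
Proof.
have -> : y%:M - A + v *m v^T = (y%:M - A) *m (1%:M + (invmx (y%:M - A) *m v) *m v^T).
  by rewrite mulmxDr mulmx1 !mulmxA mulmxV ?mul1mx ?resolvent_unit.
by rewrite det_mulmx det_add_rank1 horner_char_poly /resolvent_walks expr0 mulmx1 mulmxA.
Qed.

Lemma resolvent_walksS k :
  resolvent_walks A y k.+1 = y * resolvent_walks A y k - walks v A k.
Proof.
have AR : A *m invmx (y%:M - A) = y *: invmx (y%:M - A) - 1%:M.
  by rewrite -[in RHS](mulmxV resolvent_unit) mulmxBl mul_scalar_mx opprB addrCA subrr addr0.
rewrite /resolvent_walks exprSr -mulmxE.
have -> : v^T *m (A ^+ k *m A) *m invmx (y%:M - A) *m v =
          v^T *m A ^+ k *m (A *m invmx (y%:M - A)) *m v by rewrite !mulmxA.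
rewrite AR mulmxBr mulmxBl mulmx1 -scalemxAr -scalemxAl /walks.
by move: (v^T *m _ *m _ *m v) (v^T *m A ^+ k *m v) => X W; rewrite !mxE.
Qed.

Lemma resolvent_walks_prefix k :
  resolvent_walks A y k = y ^+ k * resolvent_walks A y 0 - (prefix_poly (walks v A) k).[y].
Proof.
elim: k => [|k IHk]; first by rewrite expr0 mul1r horner0 subr0.
rewrite resolvent_walksS IHk /= hornerD (mulrC 'X) hornerMX hornerC exprS; ring.
Qed.

Lemma horner_walk_numerator :
  (walk_numerator A).[y] = (char_poly A).[y] * resolvent_walks A y 0.
Proof.
have CH : \sum_(k < size (char_poly A)) (char_poly A)`_k * resolvent_walks A y k = 0.
  move: (congr1 (fun M => (v^T *m M *m invmx (y%:M - A) *m v) 0 0) (Cayley_Hamilton A)).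
  rewrite /= mulmx0 !mul0mx [X in _ = X]mxE; apply: etrans.
  rewrite horner_mx_sum mulmx_sumr !mulmx_suml summxE.
  by apply: eq_bigr => k _; rewrite -scalemxAr -!scalemxAl mxE.
have prefix_y k : (prefix_poly (walks v A) k).[y] =
    y ^+ k * resolvent_walks A y 0 - resolvent_walks A y k.
  by rewrite (resolvent_walks_prefix k); ring.
rewrite /walk_numerator horner_sum.
under eq_bigr => k _ do rewrite hornerZ prefix_y mulrBr.
rewrite sumrB CH subr0 horner_coef mulr_suml.
by apply: eq_bigr => k _; rewrite mulrA.
Qed.

End Resolvent.

Lemma walks_eq_of_resolvent (F : numFieldType) n (v : 'cV[F]_n.+1) (A B : 'M[F]_n.+1) :
  char_poly A = char_poly B ->
  (forall y, (char_poly A).[y] != 0 -> resolvent_walks v A y 0 = resolvent_walks v B y 0) ->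
  forall k, walks v A k = walks v B k.
Proof.
move=> AB resAB; apply: (walks_eq AB) => m.
have numAB : walk_numerator v A = walk_numerator v B.
  suff /eqP : (walk_numerator v A - walk_numerator v B) * char_poly A = 0.
    by rewrite mulf_eq0 (negPf (monic_neq0 (char_poly_monic A))) orbF subr_eq0 => /eqP.
  apply: poly_horner_eq0 => y; rewrite hornerM hornerD hornerN.
  have [->|nz_y] := eqVneq (char_poly A).[y] 0; first by rewrite mulr0.
  have nz_By : (char_poly B).[y] != 0 by rewrite -AB.
  by rewrite !horner_walk_numerator // resAB // AB subrr mul0r.
apply: (prefix_poly_comb_inj (char_poly_monic A) (size_char_poly A)) (leq_ord m).
by move: numAB; rewrite /walk_numerator AB.
Qed.

Lemma resolvent_walks_ones_eq (F : fieldType) n (A B : 'M[F]_n.+1) y :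
  char_poly A = char_poly B ->
  char_poly (const_mx 1 - 1%:M - A) = char_poly (const_mx 1 - 1%:M - B) ->
  (char_poly A).[y] != 0 ->
  resolvent_walks (const_mx 1) A y 0 = resolvent_walks (const_mx 1) B y 0.
Proof.
move=> AB JAB nz_Ay; have nz_By : (char_poly B).[y] != 0 by rewrite -AB.
have : \det (y%:M - A + const_mx 1) = \det (y%:M - B + const_mx 1).
  move: (congr1 (fun p => p.[- y - 1]) JAB); rewrite /= !char_poly_complement.
  have -> : - (- y - 1) - 1 = y by ring.
  by apply: mulfI; rewrite signr_eq0.
by rewrite const_mx1_mul_tr !det_add_resolvent // AB => /(mulfI nz_By)/addrI.
Qed.

Lemma gen_cospectral_orthogonal_similar (F : numFieldType) n (A B : 'M[F]_n.+1) :
  A^T = A -> B^T = B -> char_poly A = char_poly B ->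
  char_poly (const_mx 1 - 1%:M - A) = char_poly (const_mx 1 - 1%:M - B) ->
  irreducible_poly (char_poly A) ->
  exists Q : 'M[F]_n.+1, [/\ Q^T *m Q = 1%:M, Q *m Q^T = 1%:M,
                            Q *m (const_mx 1 : 'cV_n.+1) = const_mx 1 & Q *m B = A *m Q].
Proof.
move=> symA symB AB JAB irrA.
apply: krylov_orthogonal_similar => //; first exact: const_mx1_neq0.
by apply: walks_eq_of_resolvent => // y; apply: resolvent_walks_ones_eq.
Qed.

Section SignedIntertwiner.
Variables (F : fieldType) (n : nat) (A B Q DA DB : 'M[F]_n.+1).
Hypotheses (symA : A^T = A) (irrA : irreducible_poly (char_poly A)).
Hypotheses (Q_orth : Q^T *m Q = 1%:M) (Q_orth' : Q *m Q^T = 1%:M) (QB : Q *m B = A *m Q).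
Hypotheses (symDA : DA^T = DA) (symDB : DB^T = DB).
Hypotheses (DA_invol : DA *m DA = 1%:M) (DB_invol : DB *m DB = 1%:M).
Hypotheses (DA_anti : DA *m A = - (A *m DA)) (DB_anti : DB *m B = - (B *m DB)).

Lemma intertwiner_sign : Q *m DB = DA *m Q \/ Q *m DB = - (DA *m Q).
Proof.
pose Y := DA *m Q *m DB *m Q^T.
have QtA : Q^T *m A = B *m Q^T.
  by rewrite -[LHS]mulmx1 -Q_orth' !mulmxA -(mulmxA _ A) -QB !mulmxA Q_orth mul1mx.
have YA : Y *m A = A *m Y.
  rewrite /Y -!mulmxA QtA !mulmxA -(mulmxA _ DB) DB_anti mulmxN mulNmx.
  by rewrite -(mulmxA DA) !mulmxA -(mulmxA DA) QB mulmxA DA_anti !mulNmx opprK.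
have [p Yp] := commute_horner_mx irrA YA.
have symY : Y^T = Y by rewrite Yp trmx_horner_mx symA.
have Y_sqr : Y *m Y = 1%:M.
  rewrite -{2}symY /Y !trmx_mul trmxK symDA symDB !mulmxA -(mulmxA _ Q^T) Q_orth mulmx1.
  by rewrite -(mulmxA _ DB DB) DB_invol mulmx1 -(mulmxA _ Q) Q_orth' mulmx1 DA_invol.
have QDB : Q *m DB = DA *m Y *m Q.
  by rewrite /Y !mulmxA DA_invol mul1mx -mulmxA Q_orth mulmx1.
rewrite Yp in Y_sqr QDB; rewrite QDB; case: (horner_mx_sqr_eq1 irrA Y_sqr) => ->; [left|right].
  by rewrite mulmx1.
by rewrite mulmxN mulmx1 mulNmx.
Qed.

End SignedIntertwiner.

Lemma signed_gen_cospectral_similar (F : numFieldType) n m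
    (A DA : 'M[F]_n) (B DB : 'M[F]_m) :
  A^T = A -> B^T = B -> DA^T = DA -> DB^T = DB ->
  DA *m DA = 1%:M -> DB *m DB = 1%:M ->
  DA *m A = - (A *m DA) -> DB *m B = - (B *m DB) ->
  char_poly A = char_poly B ->
  char_poly (const_mx 1 - 1%:M - A) = char_poly (const_mx 1 - 1%:M - B) ->
  irreducible_poly (char_poly A) ->
  exists Q : 'M[F]_(n, m),
    [/\ Q^T *m Q = 1%:M, Q *m Q^T = 1%:M, Q *m (const_mx 1 : 'cV_m) = const_mx 1,
        Q^T *m A *m Q = B & Q *m DB = DA *m Q \/ Q *m DB = - (DA *m Q)].
Proof.
move=> symA symB symDA symDB DA_invol DB_invol DA_anti DB_anti AB JAB irrA.
have [k eq_n] : exists k, n = k.+1.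
  by exists n.-1; rewrite prednK // -ltnS -(size_char_poly A); case: irrA.
have eq_nm : n = m.
  by move: (congr1 (size : {poly F} -> nat) AB); rewrite !size_char_poly => -[].
subst m n.
have [Q [Q_orth Q_orth' Q_ones QB]] := gen_cospectral_orthogonal_similar symA symB AB JAB irrA.
exists Q; split => //; first by rewrite -mulmxA -QB mulmxA Q_orth mul1mx.
exact: (intertwiner_sign symA irrA Q_orth Q_orth' QB).
Qed.

Lemma oppmx_eq_self (F : numDomainType) m n (X : 'M[F]_(m, n)) : - X = X -> X = 0.
Proof.
move=> NX; apply/matrixP => i j.
by move/matrixP/(_ i j)/eqP: NX; rewrite !mxE eqNr => /eqP.
Qed.

Definition sign_mx {R : pzRingType} p q : 'M[R]_(p + q) := block_mx 1%:M 0 0 (- 1%:M).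

Lemma trmx_sign_mx {R : pzRingType} p q : (@sign_mx R p q)^T = sign_mx p q.
Proof. by rewrite /sign_mx tr_block_mx !trmx0 linearN /= !trmx1. Qed.

Lemma sign_mx_invol {R : pzRingType} p q : @sign_mx R p q *m sign_mx p q = 1%:M.
Proof.
rewrite /sign_mx mulmx_block !(mulmx0, mul0mx, mulmx1, addr0, add0r) mulmxN mulNmx opprK.
by rewrite mulmx1 -scalar_mx_block.
Qed.

Lemma trmx_bip_adj p q (M : 'M[rat]_(p, q)) : (bip_adj M)^T = bip_adj M.
Proof. by rewrite /bip_adj tr_block_mx !trmx0 trmxK. Qed.

Lemma sign_mx_bip_adj p q (M : 'M[rat]_(p, q)) :
  sign_mx p q *m bip_adj M = - (bip_adj M *m sign_mx p q).
Proof.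
rewrite /sign_mx /bip_adj !mulmx_block !(mulmx0, mul0mx, mulmx1, mul1mx, addr0, add0r).
by rewrite !(mulmxN, mulNmx, mul1mx, mulmx1) opp_block_mx !oppr0 opprK.
Qed.

Section SignBlocks.
Variables (F : numDomainType) (p q p' q' : nat) (Q : 'M[F]_(p + q, p' + q')).

Lemma sign_mx_commute_block :
  Q *m sign_mx p' q' = sign_mx p q *m Q -> Q = block_mx (ulsubmx Q) 0 0 (drsubmx Q).
Proof.
rewrite -{1 2}(submxK Q) /sign_mx !mulmx_block.
rewrite !(mulmx0, mul0mx, mulmx1, mul1mx, addr0, add0r, mulmxN, mulNmx).
case/eq_block_mx => _ Qur Qdl _.
by rewrite -{1}(submxK Q) (oppmx_eq_self Qur) (oppmx_eq_self (esym Qdl)).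
Qed.

Lemma sign_mx_anticommute_block :
  Q *m sign_mx p' q' = - (sign_mx p q *m Q) -> Q = block_mx 0 (ursubmx Q) (dlsubmx Q) 0.
Proof.
rewrite -{1 2}(submxK Q) /sign_mx !mulmx_block.
rewrite !(mulmx0, mul0mx, mulmx1, mul1mx, addr0, add0r, mulmxN, mulNmx) opp_block_mx opprK.
case/eq_block_mx => Qul _ _ Qdr.
by rewrite -{1}(submxK Q) (oppmx_eq_self (esym Qul)) (oppmx_eq_self (etrans Qdr (opprK _))).
Qed.

End SignBlocks.

Lemma orthogonal_regular_block_diag p q p' q' (Q1 : 'M[rat]_(p, p')) (Q2 : 'M[rat]_(q, q')) :
  orthogonal_mx (block_mx Q1 0 0 Q2) -> regular (block_mx Q1 0 0 Q2) ->
  [/\ orthogonal_mx Q1, regular Q1, orthogonal_mx Q2 & regular Q2].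
Proof.
rewrite /orthogonal_mx /regular tr_block_mx !trmx0 !mulmx_block -!col_mx_const mul_block_col.
rewrite !(mulmx0, mul0mx, addr0, add0r) !scalar_mx_block.
by case=> /eq_block_mx[? _ _ ?] /eq_block_mx[? _ _ ?] /eq_col_mx[].
Qed.

Lemma orthogonal_regular_block_antidiag p q p' q' (Q1 : 'M[rat]_(p, q')) (Q2 : 'M[rat]_(q, p')) :
  orthogonal_mx (block_mx 0 Q1 Q2 0) -> regular (block_mx 0 Q1 Q2 0) ->
  [/\ orthogonal_mx Q1, regular Q1, orthogonal_mx Q2 & regular Q2].
Proof.
rewrite /orthogonal_mx /regular tr_block_mx !trmx0 !mulmx_block -!col_mx_const mul_block_col.
rewrite !(mulmx0, mul0mx, addr0, add0r) !scalar_mx_block.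
by case=> /eq_block_mx[? _ _ ?] /eq_block_mx[? _ _ ?] /eq_col_mx[].
Qed.

Theorem theorem3p1 (p q p' q' : nat)
  (M : 'M[rat]_(p, q)) (Mt : 'M[rat]_(p', q')) :
  signed_block M -> signed_block Mt ->
  gen_cospectral (bip_adj M) (bip_adj Mt) ->
  irreducible_poly (char_poly (bip_adj M)) ->
  exists Q : 'M[rat]_(p + q, p' + q'),
    [/\ orthogonal_mx Q, regular Q,
        Q^T *m bip_adj M *m Q = bip_adj Mt &
        (exists (Q1 : 'M[rat]_(p, p')) (Q2 : 'M[rat]_(q, q')),
            [/\ Q = block_mx Q1 0 0 Q2,
                orthogonal_mx Q1, regular Q1, orthogonal_mx Q2 & regular Q2])
        \/
        (exists (Q1 : 'M[rat]_(p, q')) (Q2 : 'M[rat]_(q, p')),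
            [/\ Q = block_mx 0 Q1 Q2 0,
                orthogonal_mx Q1, regular Q1, orthogonal_mx Q2 & regular Q2])].
Proof.
move=> _ _ [AB JAB] irrA.
have [Q [Q_orth Q_orth' Q_ones QAQ QD]] := signed_gen_cospectral_similar
  (trmx_bip_adj M) (trmx_bip_adj Mt) (trmx_sign_mx p q) (trmx_sign_mx p' q')
  (sign_mx_invol p q) (sign_mx_invol p' q') (sign_mx_bip_adj M) (sign_mx_bip_adj Mt)
  AB JAB irrA.
have orthQ : orthogonal_mx Q by [].
exists Q; split => //; case: QD => [/sign_mx_commute_block | /sign_mx_anticommute_block] QE.
- left; exists (ulsubmx Q), (drsubmx Q); rewrite QE in orthQ Q_ones.
  by have [] := orthogonal_regular_block_diag orthQ Q_ones.
- right; exists (ursubmx Q), (dlsubmx Q); rewrite QE in orthQ Q_ones.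
  by have [] := orthogonal_regular_block_antidiag orthQ Q_ones.
Qed.
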